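(* Let $m\ge 38$ be even and let $G$ be a graph with maximum spectral radius among all $H(4,3)$-free graphs with $m$ edges and no isolated vertices. Let $\mathbf{x}$ be the Perron vector of $G$, $u^*$ a vertex maximizing $x_{u^*}$, $N = N(u^* )$, $A_+ = \{v\in N : d_N(v)\ge 1\}$ and $W = V(G)\setminus N[u^*]$. If $G[A_+]\cong K_{1,t}$ for some $t\ge 1$, then $W=\emptyset$.
   Context: All graphs are simple and undirected; $\rho(G)$ is the largest adjacency eigenvalue and the Perron vector is the positive unit eigenvector for $\rho(G)$ (the extremal $G$ is connected). $H(4,3)$ is the graph formed by a cycle of length $4$ and a triangle sharing exactly one common vertex. $N(v)$ denotes the neighbourhood of $v$, $N[v]=N(v)\cup\{v\}$, $d_S(v)=|N(v)\cap S|$, and $G[S]$ is the subgraph induced by $S$. *)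

From HB Require Import structures.
From mathcomp Require Import all_boot all_order all_algebra.
From mathcomp Require Import reals.
Set Implicit Arguments. Unset Strict Implicit. Unset Printing Implicit Defensive.
Import Order.TTheory GRing.Theory Num.Theory.
Local Open Scope ring_scope.

Definition simple_graph (n : nat) (e : rel 'I_n) : Prop :=
  symmetric e /\ irreflexive e.

Definition nedges (n : nat) (e : rel 'I_n) : nat :=
  #|[set p : 'I_n * 'I_n | e p.1 p.2 && (p.1 < p.2)%N]|.

Definition no_isolated (n : nat) (e : rel 'I_n) : Prop :=
  forall v : 'I_n, exists w, e v w.

(* H(4,3): a 4-cycle c-a1-a2-a3-c and a triangle c-p-q sharing only c.
   G contains H(4,3) (as a subgraph) iff there are 6 distinct vertices with
   these 7 edges. *)
Definition contains_H43 (n : nat) (e : rel 'I_n) : Prop :=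
  exists c a1 a2 a3 p q : 'I_n,
    [/\ uniq [:: c; a1; a2; a3; p; q],
        [&& e c a1, e a1 a2, e a2 a3 & e a3 c] &
        [&& e c p, e p q & e q c]].

Definition H43_free (n : nat) (e : rel 'I_n) : Prop := ~ contains_H43 e.

Definition adj (R : realType) (n : nat) (e : rel 'I_n) : 'M[R]_n :=
  \matrix_(i, j) (e i j)%:R.

Definition is_spectral_radius (R : realType) (n : nat) (e : rel 'I_n) (r : R)
  : Prop :=
  eigenvalue (adj R e) r /\ (forall l : R, eigenvalue (adj R e) l -> l <= r).

Definition perron_vector (R : realType) (n : nat) (e : rel 'I_n) (r : R)
  (x : 'cV[R]_n) : Prop :=
  [/\ forall i, 0 < x i 0,
      \sum_i x i 0 ^+ 2 = 1 &
      adj R e *m x = r *: x].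

Definition extremal_H43 (R : realType) (m n : nat) (e : rel 'I_n) (r : R)
  : Prop :=
  [/\ simple_graph e, H43_free e, nedges e = m, no_isolated e &
      is_spectral_radius e r] /\
      (forall (n' : nat) (e' : rel 'I_n') (r' : R),
        simple_graph e' -> H43_free e' -> nedges e' = m -> no_isolated e' ->
        is_spectral_radius e' r' -> r' <= r).

Definition nbh (n : nat) (e : rel 'I_n) (u : 'I_n) : {set 'I_n} :=
  [set v | e u v].

From HB Require Import structures.
From mathcomp Require Import all_boot all_order all_algebra.
From mathcomp Require Import reals.
From mathcomp Require Import ring lra zify.
Set Implicit Arguments. Unset Strict Implicit. Unset Printing Implicit Defensive.
Import Order.TTheory GRing.Theory Num.Theory.
Local Open Scope ring_scope.

(* The book of k triangles on an edge with a pendant edge attached is H(4,3)-free, since two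
   vertices cover its edges, and has m = 2k + 2 edges; its spectral radius lam satisfies
   lam^2 - lam > m - 2 + 3/10, and by extremality so does rho.  On the other hand, counting
   walks of length two from u, with x_u maximal and G[A+] a star, gives
     (rho^2 - rho) x_u + e(W) x_u + sum_{z in W} d_N(z) (x_u - x_z) <= (m - 1) x_u.
   A vertex w of W either has a neighbour in W, so e(W) >= 1, or has between one and three
   neighbours, all in N (four would close an H(4,3) through u), whence rho x_w <= d_N(w) x_u and
   the last sum is at least 3/4 x_u.  Either way rho^2 - rho <= m - 7/4, a contradiction. *)

Lemma nedges_sum (n : nat) (e : rel 'I_n) :
  nedges e = (\sum_i \sum_j (e i j && (i < j)%N : nat))%N.
Proof.
rewrite /nedges -sum1_card big_mkcond /=.
rewrite (pair_big xpredT xpredT (fun i j => (e i j && (i < j)%N : nat))) /=.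
by apply: eq_bigr => -[i j] _; rewrite inE /=; case: (_ && _).
Qed.

Lemma handshake (n : nat) (e : rel 'I_n) : simple_graph e ->
  (nedges e).*2 = (\sum_i \sum_j (e i j : nat))%N.
Proof.
move=> [e_sym e_irr]; rewrite nedges_sum -addnn.
have -> : (\sum_i \sum_j (e i j : nat) =
    \sum_i \sum_j (e i j && (i < j)%N : nat)
  + \sum_i \sum_j (e i j && (j < i)%N : nat))%N.
  rewrite -big_split; apply: eq_bigr => i _; rewrite -big_split.
  apply: eq_bigr => j _ /=.
  case: (ltngtP i j) => [||/val_inj ->]; rewrite ?andbT ?andbF ?addn0 //.
  by rewrite e_irr.
congr (_ + _)%N; rewrite exchange_big /=.
by apply: eq_bigr => i _; apply: eq_bigr => j _; rewrite e_sym.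
Qed.

Lemma positive_eigenvector_spectral_radius (R : realType) (n : nat)
    (e : rel 'I_n) (lam : R) (y : 'I_n -> R) (i0 : 'I_n) :
  symmetric e -> (forall i, 0 < y i) ->
  (forall i, \sum_j (e i j)%:R * y j = lam * y i) -> is_spectral_radius e lam.
Proof.
move=> e_sym y_pos y_eigen; split.
  apply/eigenvalueP; exists (\row_j y j).
    apply/rowP => j; rewrite !mxE -y_eigen; apply: eq_bigr => i _.
    by rewrite !mxE e_sym mulrC.
  by apply/negP => /eqP/rowP/(_ i0); rewrite !mxE => /eqP; rewrite gt_eqF.
move=> l /eigenvalueP [z z_eigen z_neq0].
(* Test |l| |z| <= A |z| against the positive vector y, using the symmetry of A. *)
have z_le j : `|l| * `|z 0 j| <= \sum_i `|z 0 i| * (e j i)%:R.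
  have := congr1 (fun M : 'rV_n => M 0 j) z_eigen; rewrite !mxE => zj.
  rewrite -normrM -zj; apply: le_trans (ler_norm_sum _ _ _) _.
  by apply: ler_sum => i _; rewrite mxE normrM e_sym normr_nat.
set S := \sum_j `|z 0 j| * y j.
have S_gt0 : 0 < S.
  have [j zj] : exists j, z 0 j != 0.
    case: (pickP (fun j => z 0 j != 0)) => [j zj|z0]; first by exists j.
    move/negP: z_neq0; case; apply/eqP/rowP => j; rewrite mxE.
    exact/eqP/negbFE/z0.
  rewrite /S (bigD1 j) //=; apply: ltr_pwDl; first by rewrite mulr_gt0 ?normr_gt0.
  by apply: sumr_ge0 => i _; rewrite mulr_ge0 ?normr_ge0 ?ltW ?y_pos.
have : `|l| * S <= lam * S.
  rewrite /S mulr_sumr.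
  apply: (@le_trans _ _ (\sum_j (\sum_i `|z 0 i| * (e j i)%:R) * y j)).
    by apply: ler_sum => j _; rewrite mulrA ler_wpM2r // ltW.
  under eq_bigr do rewrite mulr_suml.
  rewrite exchange_big /= mulr_sumr le_eqVlt; apply/orP; left.
  apply/eqP/eq_bigr => i _.
  rewrite mulrCA -y_eigen mulr_sumr; apply: eq_bigr => j _.
  by rewrite e_sym mulrA.
by rewrite ler_pM2r // => /(le_trans (ler_norm l)).
Qed.

Lemma three_le1 {i j l : nat} :
  (i <= 1)%N -> (j <= 1)%N -> (l <= 1)%N -> i != j -> i != l -> j != l -> False.
Proof. by case: i j l => [|[|?]] [|[|?]] [|[|?]]. Qed.

(* H(4,3) has the three disjoint edges a1a2, a3c and pq, so no two vertices cover its edges. *)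
Lemma H43_free_cover01 (n : nat) (e : rel 'I_n) :
  (forall i j, e i j -> (i <= 1)%N || (j <= 1)%N) -> H43_free e.
Proof.
move=> cover [c [a1 [a2 [a3 [p [q [+ /and4P [_ /cover h1 _ /cover h2]]]]]]]].
move=> + /and3P [_ /cover h3 _]; rewrite /= !inE -!val_eqE !negb_or !andbT.
move=> /andP [/and5P [? ? ? ? ?] /andP [/and4P [? ? ? ?]]].
move=> /andP [/and3P [? ? ?] /andP [/andP [? ?] ?]].
case/orP: h1 => h1; case/orP: h2 => h2; case/orP: h3 => h3;
  by apply: (three_le1 h1 h2 h3); rewrite // eq_sym.
Qed.

(* Vertex 0 is joined to every other vertex and vertex 1 to the vertices 3, ..., k+2:
   the book of k triangles on the spine 01, with a pendant vertex 2 attached to 0. *)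
Definition pendant_book_arc (i j : nat) : bool :=
  ((i == 0%N) && (j != 0%N)) || ((i == 1%N) && (2 < j)%N).

Definition pendant_book (k : nat) : rel 'I_k.+3 :=
  fun i j => pendant_book_arc i j || pendant_book_arc j i.
Arguments pendant_book : clear implicits.

Lemma pendant_book_simple (k : nat) : simple_graph (pendant_book k).
Proof.
split; first by move=> i j; rewrite /pendant_book orbC.
by move=> i; rewrite /pendant_book orbb /pendant_book_arc; case: (nat_of_ord i) => [|[|]].
Qed.

Lemma pendant_book_no_isolated (k : nat) : no_isolated (pendant_book k).
Proof.
move=> v; have [v0|v0] := eqVneq (nat_of_ord v) 0%N.
  by exists (Ordinal (isT : (1 < k.+3)%N)); rewrite /pendant_book /pendant_book_arc v0.
by exists ord0; rewrite /pendant_book /pendant_book_arc /= v0 orbT.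
Qed.

Lemma pendant_book_H43_free (k : nat) : H43_free (pendant_book k).
Proof.
by apply: H43_free_cover01 => i j; rewrite /pendant_book /pendant_book_arc;
  case/orP=> /orP [] /andP [/eqP -> _]; rewrite ?orbT.
Qed.

Lemma sum_ord_split3 (R : nmodType) (k : nat) (G : nat -> R) :
  \sum_(j < k.+3) G j = G 0%N + G 1%N + G 2%N + \sum_(3 <= j < k.+3) G j.
Proof. by rewrite -(big_mkord xpredT) big_ltn // big_ltn // big_ltn // !addrA. Qed.

Lemma sum_nat_tail_const (R : semiRingType) (k : nat) (G : nat -> R) (c : R) :
  (forall j, (3 <= j)%N -> G j = c) -> \sum_(3 <= j < k.+3) G j = c * k%:R.
Proof.
move=> Gc; rewrite (eq_big_nat _ _ (F2 := fun=> c)); last by move=> j /andP [/Gc].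
by rewrite sumr_const_nat mulr_natr; congr (_ *+ _); lia.
Qed.

Lemma pendant_book_rowsum (R : semiRingType) (k : nat) (g : nat -> R) (i : nat) :
  \sum_(j < k.+3) (pendant_book_arc i j || pendant_book_arc j i)%:R * g j =
  match i with
  | 0 => g 1%N + g 2%N + \sum_(3 <= j < k.+3) g j
  | 1 => g 0%N + \sum_(3 <= j < k.+3) g j
  | 2 => g 0%N
  | _ => g 0%N + g 1%N
  end.
Proof.
rewrite (sum_ord_split3 k (fun j => (pendant_book_arc i j || pendant_book_arc j i)%:R * g j)).
have -> : \sum_(3 <= j < k.+3) (pendant_book_arc i j || pendant_book_arc j i)%:R * g j
    = \sum_(3 <= j < k.+3) ((i == 0%N) || (i == 1%N))%:R * g j.
  apply: eq_big_nat => j /andP [j3 _]; rewrite /pendant_book_arc.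
  by case: j j3 => [|[|[|j]]] //= _; rewrite !andbT !orbF.
rewrite /pendant_book_arc /=.
case: i => [|[|[|i]]] /=; rewrite ?mul0r ?mul1r ?add0r ?addr0;
  rewrite ?(eq_bigr _ (fun j _ => mul1r (g j))) ?(eq_bigr _ (fun j _ => mul0r (g j)));
  by rewrite ?big1_eq ?addr0.
Qed.

Lemma pendant_book_nedges (k : nat) : nedges (pendant_book k) = (2 * k + 2)%N.
Proof.
have deg (i : 'I_k.+3) : \sum_(j < k.+3) (pendant_book k i j)%:R =
    (match nat_of_ord i with 0 => k + 2 | 1 => k + 1 | 2 => 1 | _ => 2 end)%N%:R :> rat.
  rewrite -(eq_bigr _ (fun j _ => mulr1 _)) (pendant_book_rowsum k (fun=> 1)).
  rewrite (sum_nat_tail_const k (c := 1)) // mul1r.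
  by case: (nat_of_ord i) => [|[|[|?]]]; rewrite ?natrD //; lra.
have : ((nedges (pendant_book k)).*2)%:R = (4 * k + 4)%N%:R :> rat.
  rewrite (handshake (pendant_book_simple k)) natr_sum.
  under eq_bigr do rewrite natr_sum deg.
  rewrite (sum_ord_split3 k (fun i =>
     (match i with 0 => k + 2 | 1 => k + 1 | 2 => 1 | _ => 2 end)%N%:R)).
  rewrite (sum_nat_tail_const k (c := 2%N%:R)); last by case=> [|[|[|]]].
  by rewrite !natrD; lra.
move/eqP; rewrite eqr_nat => /eqP; lia.
Qed.

(* The eigen-equations of the vector (1, b, 1/lam, l, ..., l) on [pendant_book k],
   after eliminating b and l. *)
Definition pendant_book_root (R : realFieldType) (k : nat) (lam : R) : Prop :=
  [/\ k%:R + 1 <= lam ^+ 2, 0 < lam &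
      (lam ^+ 2 - k%:R) * (lam ^+ 2 - 1 - k%:R) = (lam + k%:R) ^+ 2].

Lemma pendant_book_root_exists (R : rcfType) (k : nat) :
  exists lam : R, pendant_book_root k lam.
Proof.
set K : R := k%:R; have K0 : 0 <= K by rewrite ler0n.
pose p : {poly R} :=
  ('X^2 - K%:P) * ('X^2 - (1 + K)%:P) - ('X + K%:P) ^+ 2.
have pE y : p.[y] = (y ^+ 2 - K) * (y ^+ 2 - 1 - K) - (y + K) ^+ 2.
  by rewrite /p !hornerE opprD addrA.
set a := Num.sqrt (K + 1).
have a0 : 0 <= a by rewrite sqrtr_ge0.
have a2 : a ^+ 2 = K + 1 by rewrite sqr_sqrtr // addr_ge0.
have [y /andP [ay _] /rootP py0] : exists2 y, a <= y <= K + 3 & root p y.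
  by apply: poly_ivt; [nra | rewrite !pE; apply/andP; split; nra].
exists y; split; [nra | nra |].
by move/eqP: py0; rewrite pE subr_eq0 => /eqP.
Qed.

Lemma pendant_book_spectral_radius (R : realType) (k : nat) (lam : R) :
  pendant_book_root k lam -> is_spectral_radius (pendant_book k) lam.
Proof.
move=> [lam2 lam_gt0 quartic].
set K : R := k%:R in lam2 quartic *; have K0 : 0 <= K by rewrite ler0n.
set D := lam ^+ 2 - K; have D_gt0 : 0 < D by rewrite /D; lra.
set b := (lam + K) / D; have b_gt0 : 0 < b by rewrite divr_gt0 //; lra.
set l := (1 + b) / lam; have l_gt0 : 0 < l by rewrite divr_gt0 //; lra.
pose g (j : nat) : R := match j with 0 => 1 | 1 => b | 2 => lam^-1 | _ => l end.
apply: (positive_eigenvector_spectral_radius (y := fun j => g j) ord0).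
- exact: (pendant_book_simple k).1.
- by move=> i; rewrite /g; case: (nat_of_ord i) => [|[|[|j]]]; rewrite ?invr_gt0.
move=> i; rewrite /pendant_book (pendant_book_rowsum k g i).
rewrite (sum_nat_tail_const k (c := l)); last by case=> [|[|[|]]].
have lam_neq0 : lam != 0 by rewrite gt_eqF.
have D_neq0 : D != 0 by rewrite gt_eqF.
case: (nat_of_ord i) => [|[|[|j]]] /=.
- apply/eqP; rewrite -subr_eq0.
  have -> : b + lam^-1 + l * K - lam * 1 =
      ((lam + K) ^+ 2 - D * (lam ^+ 2 - 1 - K)) / (lam * D).
    by rewrite /l /b; field; apply/andP.
  by rewrite -quartic /D subrr mul0r.
- by rewrite /l /b /D; field; apply/andP; split; rewrite -/D.
- by rewrite mulfV.
- by rewrite /l mulrC divfK.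
Qed.

Lemma pendant_book_root_gap (R : realFieldType) (k : nat) (lam : R) :
  pendant_book_root k lam -> 3 / 10 < lam ^+ 2 - lam - 2 * k%:R.
Proof.
move=> [lam2 lam_gt0 quartic].
set K : R := k%:R in lam2 quartic *; have K0 : 0 <= K by rewrite ler0n.
set d := lam ^+ 2 - lam - 2 * K.
have gap_eq : d * (2 * (lam + K) + d - 1) = lam + K.
  have lamE : lam ^+ 2 = lam + 2 * K + d by rewrite /d; ring.
  by move: quartic; rewrite lamE; nra.
have : lam + K <= 2 * (lam + K) + d - 1 by rewrite /d; nra.
nra.
Qed.

Lemma sum_pivot_set (R : nmodType) (n : nat) (u : 'I_n) (S : {set 'I_n})
    (F : 'I_n -> R) :
  u \notin S ->
  \sum_z F z = F u + \sum_(z in S) F z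
             + \sum_(z in [set v | (v != u) && (v \notin S)]) F z.
Proof.
move=> uS; rewrite (bigD1 u) //= (bigID (mem S)) /= addrA.
congr (_ + _ + _); apply: eq_bigl => z; rewrite ?inE.
  by case: eqP => [->|]; rewrite ?(negbTE uS) ?andbT.
by rewrite andbC.
Qed.

Lemma card_gt3_avoid2 (T : finType) (A : {set T}) (x y : T) : (3 < #|A|)%N ->
  exists a b, [/\ a \in A, b \in A, a != b & [/\ a != x, a != y, b != x & b != y]].
Proof.
move=> A_gt3.
have Bx := cardsD1 x A; have By := cardsD1 y (A :\ x).
have : (0 < #|A :\ x :\ y|)%N by move: Bx By; case: (_ \in _); case: (_ \in _); lia.
case/card_gt0P => a aB; have Ba := cardsD1 a (A :\ x :\ y); rewrite aB in Ba.
have : (0 < #|A :\ x :\ y :\ a|)%N by move: Bx By; case: (_ \in _); case: (_ \in _); lia.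
case/card_gt0P => b; move: aB; rewrite !in_setD1 => /and3P [ay ax aA] /and4P [ba b_y bx bA].
by exists a, b; split; rewrite // eq_sym.
Qed.

Section PerronNeighbourhood.

Variables (R : realType) (n : nat) (e : rel 'I_n) (rho : R) (x : 'cV[R]_n) (u : 'I_n).
Hypotheses (e_sym : symmetric e) (e_irr : irreflexive e).
Hypotheses (x_pos : forall v, 0 < x v 0) (x_max : forall v, x v 0 <= x u 0).
Hypothesis x_eigen : adj R e *m x = rho *: x.

Local Notation X v := (x v 0).
Local Notation N := (nbh e u).
Local Notation W := [set v : 'I_n | (v != u) && (v \notin N)].

Definition deg_in (S : {set 'I_n}) (v : 'I_n) : R := \sum_(w in S) (e v w)%:R.

Lemma deg_in_ge0 (S : {set 'I_n}) v : 0 <= deg_in S v.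
Proof. by apply: sumr_ge0 => w _; rewrite ler0n. Qed.

Lemma deg_in_ge1 (S : {set 'I_n}) v w : w \in S -> e v w -> 1 <= deg_in S v.
Proof.
move=> wS evw; rewrite /deg_in (bigD1 w wS) /= evw lerDl.
by apply: sumr_ge0 => z _; rewrite ler0n.
Qed.

Lemma deg_in_card (S : {set 'I_n}) v : deg_in S v = #|[set w in S | e v w]|%:R.
Proof.
rewrite -sum1_card natr_sum [RHS]big_mkcond [LHS]big_mkcond /=.
by apply: eq_bigr => w _; rewrite inE; case: (w \in S); case: (e v w).
Qed.

Lemma in_nbh v : (v \in N) = e u v.
Proof. by rewrite inE. Qed.

Lemma notin_nbh_self : u \notin N.
Proof. by rewrite in_nbh e_irr. Qed.

Lemma eigen_row v : \sum_z (e v z)%:R * X z = rho * X v.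
Proof.
have := congr1 (fun M : 'cV_n => M v 0) x_eigen; rewrite !mxE => <-.
by apply: eq_bigr => z _; rewrite mxE.
Qed.

Lemma eigen_row_nbh : rho * X u = \sum_(v in N) X v.
Proof.
rewrite -eigen_row [RHS]big_mkcond /=; apply: eq_bigr => z _; rewrite in_nbh.
by case: (e u z); rewrite ?mul1r ?mul0r.
Qed.

Lemma eigen_two_walks :
  rho ^+ 2 * X u = #|N|%:R * X u + \sum_(z in N) deg_in N z * X z
                 + \sum_(z in W) deg_in N z * X z.
Proof.
have deg_u : deg_in N u = #|N|%:R.
  rewrite /deg_in -sum1_card natr_sum; apply: eq_bigr => v.
  by rewrite in_nbh => ->.
rewrite -deg_u -(sum_pivot_set _ notin_nbh_self) expr2 -mulrA eigen_row_nbh.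
rewrite mulr_sumr; under eq_bigr => v _ do rewrite -eigen_row.
rewrite exchange_big /=; apply: eq_bigr => z _; rewrite /deg_in mulr_suml.
by apply: eq_bigr => v _; rewrite e_sym.
Qed.

Lemma nedges_nbh_split :
  2 * (nedges e)%:R = 2 * #|N|%:R + \sum_(z in N) deg_in N z
    + 2 * \sum_(z in W) deg_in N z + \sum_(z in W) deg_in W z.
Proof.
have deg z : \sum_v (e z v)%:R = (e z u)%:R + deg_in N z + deg_in W z :> R.
  exact: sum_pivot_set notin_nbh_self.
have W_u z : z \in W -> e z u = false.
  by rewrite inE e_sym -in_nbh => /andP [_ /negbTE].
have cross : \sum_(z in N) deg_in W z = \sum_(z in W) deg_in N z.
  rewrite /deg_in exchange_big /=.
  by apply: eq_bigr => z _; apply: eq_bigr => v _; rewrite e_sym.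
rewrite -natrM mul2n (handshake (conj e_sym e_irr)) natr_sum.
under eq_bigr do rewrite natr_sum deg.
rewrite (sum_pivot_set _ notin_nbh_self) e_irr add0r.
under [\sum_(z in N) _]eq_bigr => z zN do rewrite e_sym -in_nbh zN.
under [\sum_(z in W) _]eq_bigr => z zW do rewrite W_u // add0r.
rewrite !big_split /= cross sumr_const deg_in_card.
have -> : [set w in N | e u w] = N by apply/setP => w; rewrite !inE andbb.
have -> : deg_in W u = 0.
  by apply: big1 => v; rewrite !inE => /andP [_ /negbTE ->].
by rewrite -[1 *+ #|N|]/(#|N|%:R); ring.
Qed.

Variables c l : 'I_n.
Local Notation Aplus := [set v in N | [exists w in N, e v w]].
Hypotheses (c_Aplus : c \in Aplus) (l_Aplus : l \in Aplus) (l_neq_c : l != c).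
Hypothesis Aplus_star : {in Aplus &, forall v w, e v w = (v == c) (+) (w == c)}.

Lemma c_nbh : c \in N.
Proof. by move: c_Aplus; rewrite inE => /andP []. Qed.

Lemma l_nbh : l \in N.
Proof. by move: l_Aplus; rewrite inE => /andP []. Qed.

Lemma edge_c_l : e c l.
Proof. by rewrite Aplus_star // eqxx (negbTE l_neq_c). Qed.

Lemma nbh_edge_star z v :
  z \in N -> z != c -> v \in N -> e z v = e z c && (v == c).
Proof.
move=> zN zc vN; case ezv: (e z v); last first.
  by have [<-|_] := eqVneq v c; rewrite ?ezv ?andbF.
have inA y y' : y \in N -> y' \in N -> e y y' -> y \in Aplus.
  by move=> yN y'N eyy'; rewrite inE yN; apply/existsP; exists y'; rewrite y'N.
have zA := inA _ _ zN vN ezv.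
have vA : v \in Aplus by apply: (inA v z) => //; rewrite e_sym.
move: (Aplus_star zA vA); rewrite ezv (negbTE zc) /= => /esym/eqP vc.
by rewrite -vc ezv eqxx.
Qed.

Lemma deg_in_nbh_star z : z \in N -> z != c -> deg_in N z = (e z c)%:R.
Proof.
move=> zN zc; rewrite /deg_in (bigD1 c c_nbh) /= big1 ?addr0.
  by rewrite nbh_edge_star // ?c_nbh // eqxx andbT.
by move=> v /andP [vN vc]; rewrite nbh_edge_star // (negbTE vc) andbF.
Qed.

Lemma deg_in_nbh_center_ge1 : 1 <= deg_in N c.
Proof. exact: deg_in_ge1 l_nbh edge_c_l. Qed.

Lemma sum_deg_in_nbh : \sum_(z in N) deg_in N z = 2 * deg_in N c.
Proof.
rewrite (bigD1 c c_nbh) /= mulr2n mulrDl mul1r; congr (_ + _).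
rewrite [RHS]/deg_in (bigD1 c c_nbh) /= e_irr add0r.
by apply: eq_bigr => z /andP [zN zc]; rewrite deg_in_nbh_star // e_sym.
Qed.

Lemma sum_deg_in_nbh_weighted :
  \sum_(z in N) deg_in N z * X z <= (deg_in N c - 1) * X u + rho * X u.
Proof.
rewrite (bigD1 c c_nbh) /= eigen_row_nbh (bigD1 c c_nbh) /=.
have rest : \sum_(z in N | z != c) deg_in N z * X z <= \sum_(z in N | z != c) X z.
  apply: ler_sum => z /andP [zN zc]; rewrite deg_in_nbh_star //.
  by case: (e z c); rewrite ?mul1r ?mul0r // ltW.
have := deg_in_nbh_center_ge1; have := x_max c; have := x_pos c; nra.
Qed.

Lemma nbh_walk_bound :
  (rho ^+ 2 - rho) * X u + (\sum_(z in W) deg_in W z) / 2 * X u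
    + \sum_(z in W) deg_in N z * (X u - X z) <= ((nedges e)%:R - 1) * X u.
Proof.
have slackE : \sum_(z in W) deg_in N z * (X u - X z)
    = (\sum_(z in W) deg_in N z) * X u - \sum_(z in W) deg_in N z * X z.
  by rewrite mulr_suml -sumrB; apply: eq_bigr => z _; ring.
have := congr1 ( *%R^~ (X u)) nedges_nbh_split; rewrite /= sum_deg_in_nbh.
have := eigen_two_walks; have := sum_deg_in_nbh_weighted; rewrite slackE; lra.
Qed.

Lemma W_edge_bound w w' : w \in W -> w' \in W -> e w w' ->
  rho ^+ 2 - rho <= (nedges e)%:R - 2.
Proof.
move=> wW w'W eww'.
have w'w : w' != w by apply: contraTneq eww' => ->; rewrite e_irr.
have eW_ge1 : 2 <= \sum_(z in W) deg_in W z.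
  rewrite (bigD1 w wW) /= (bigD1 w') /=; last by apply/andP.
  have ew'w : e w' w by rewrite e_sym.
  have := deg_in_ge1 w'W eww'; have := deg_in_ge1 wW ew'w.
  set rest := \sum_(i | _) _; have : 0 <= rest.
    by apply: sumr_ge0 => z _; exact: deg_in_ge0.
  lra.
have slack_ge0 : 0 <= \sum_(z in W) deg_in N z * (X u - X z).
  by apply: sumr_ge0 => z _; rewrite mulr_ge0 ?deg_in_ge0 ?subr_ge0.
have := nbh_walk_bound; have := x_pos u; nra.
Qed.

Hypotheses (e_free : H43_free e) (e_no_isolated : no_isolated e).

(* Four neighbours of w in N give two, a1 and a3, besides c and l: then u a1 w a3 is a 4-cycle
   and u c l a triangle. *)
Lemma deg_in_nbh_le3 w : w \in W -> deg_in N w <= 3.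
Proof.
move=> wW; rewrite deg_in_card (ler_nat _ _ 3) leqNgt; apply/negP => /card_gt3_avoid2.
move=> /(_ c l) [a1 [a3 [+ + a13 [a1c a1l a3c a3l]]]]; rewrite !inE.
move=> /andP [ua1 ewa1] /andP [ua3 ewa3].
move: wW; rewrite !inE => /andP [wu wN].
have nbh_neq y : e u y -> y != w by apply: contraTneq => ->.
have u_neq y : e u y -> u != y by apply: contraTneq => <-; rewrite e_irr.
have uc := c_nbh; have ul := l_nbh; rewrite !in_nbh in uc ul.
apply: e_free; exists u, a1, w, a3, c, l; split.
- rewrite /= !inE !negb_or !andbT (eq_sym u w) wu !u_neq // nbh_neq //.
  by rewrite ![w == _]eq_sym !nbh_neq // a13 a1c a1l a3c a3l eq_sym l_neq_c.
- by rewrite ua1 e_sym ewa1 ewa3 e_sym ua3.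
- by rewrite uc edge_c_l e_sym ul.
Qed.

(* With d := d_N(w): rho x_w <= d x_u, and d (1 - d / rho) >= 1 - 1 / rho when
   1 <= d <= 3 <= rho - 1. *)
Lemma W_isolated_bound w : 4 <= rho -> w \in W -> (forall v, v \in W -> ~~ e w v) ->
  rho ^+ 2 - rho <= (nedges e)%:R - 7 / 4.
Proof.
move=> rho_ge4 wW w_isol.
have wN : e w u = false by move: wW; rewrite !inE e_sym => /andP [_ /negbTE].
have deg_w : \sum_z (e w z)%:R = deg_in N w.
  rewrite (sum_pivot_set _ notin_nbh_self) wN add0r [t in _ + t]big1 ?addr0 // => v vW.
  by rewrite (negbTE (w_isol v vW)).
set d := deg_in N w.
have d_le3 : d <= 3 := deg_in_nbh_le3 wW.
have d_ge1 : 1 <= d.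
  have [z ewz] := e_no_isolated w.
  apply: (deg_in_ge1 _ ewz); apply: contraT => zN.
  have [zu|zu] := eqVneq z u; first by move: ewz; rewrite zu wN.
  by move: (w_isol z); rewrite inE zu zN ewz => /(_ isT).
have rho_xw : rho * X w <= d * X u.
  rewrite -eigen_row /d -deg_w mulr_suml; apply: ler_sum => z _.
  by rewrite ler_wpM2l ?ler0n.
have slack_w : 3 / 4 * X u <= d * (X u - X w).
  have Xu_gt0 := x_pos u.
  have d_rho_xw : d * (rho * X w) <= d * (d * X u) by rewrite ler_wpM2l //; lra.
  have d_range : 0 <= (d - 1) * (rho - d - 1) * X u by rewrite !mulr_ge0 //; lra.
  have rho_large : 0 <= (rho - 4) * X u by rewrite mulr_ge0 //; lra.
  rewrite -(ler_pM2l (_ : 0 < rho)); [lra | lra].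
have slack : 3 / 4 * X u <= \sum_(z in W) deg_in N z * (X u - X z).
  rewrite (bigD1 w wW) /=; apply: (le_trans slack_w); rewrite lerDl.
  by apply: sumr_ge0 => z _; rewrite mulr_ge0 ?deg_in_ge0 ?subr_ge0.
have eW_ge0 : 0 <= \sum_(z in W) deg_in W z by apply: sumr_ge0 => z _; exact: deg_in_ge0.
have := nbh_walk_bound; have := x_pos u; nra.
Qed.

Lemma W_nonempty_bound : 4 <= rho -> W != set0 -> rho ^+ 2 - rho <= (nedges e)%:R - 7 / 4.
Proof.
move=> rho_ge4 /set0Pn [w wW].
case: (pickP (fun v => (v \in W) && e w v)) => [w' /andP [w'W eww'] | w_isol].
  by have := W_edge_bound wW w'W eww'; lra.
by apply: (W_isolated_bound rho_ge4 wW) => v vW; move: (w_isol v); rewrite vW /= => ->.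
Qed.

End PerronNeighbourhood.

Theorem claim5 (R : realType) (m n : nat) (e : rel 'I_n) (rho : R)
  (x : 'cV[R]_n) (u : 'I_n) :
  (38 <= m)%N -> ~~ odd m ->
  extremal_H43 m e rho ->
  perron_vector e rho x ->
  (forall v : 'I_n, x v 0 <= x u 0) ->
  let N := nbh e u in
  let Aplus := [set v in N | [exists w in N, e v w]] in
  let W := [set v : 'I_n | (v != u) && (v \notin N)] in
  (exists t : nat, (1 <= t)%N /\
     exists c : 'I_n, [/\ c \in Aplus, #|Aplus| = t.+1 &
       {in Aplus &, forall v w, e v w = ((v == c) (+) (w == c))}]) ->
  W = set0.
Proof.
move=> m_ge38 m_even [[[e_sym e_irr] e_free e_m e_no_isolated _] e_max].
move=> [x_pos _ x_eigen] x_max N Aplus W [t [t_ge1 [c [c_Aplus Aplus_card Aplus_star]]]].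
have [l l_Aplus l_neq_c] : exists2 l, l \in Aplus & l != c.
  have : (0 < #|Aplus :\ c|)%N.
    by move: Aplus_card; rewrite (cardsD1 c) c_Aplus add1n => -[->].
  by case/card_gt0P => l; rewrite in_setD1 => /andP [? ?]; exists l.
have [k [m_eq k_ge18]] : exists k, m = (2 * k + 2)%N /\ (18 <= k)%N.
  have := divn_eq m 2; rewrite modn2 (negbTE m_even) addn0 => m_eq.
  by exists (m %/ 2 - 1)%N; lia.
have [lam lam_root] := pendant_book_root_exists R k.
have lam_le_rho : lam <= rho.
  apply: (e_max _ (pendant_book k)).
  - exact: pendant_book_simple.
  - exact: pendant_book_H43_free.
  - by rewrite pendant_book_nedges m_eq.
  - exact: pendant_book_no_isolated.
  - exact: pendant_book_spectral_radius.
have gap := pendant_book_root_gap lam_root; have [lam2 lam_gt0 _] := lam_root.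
have k18 : 18 <= k%:R :> R by rewrite (ler_nat _ 18).
have rho_ge4 : 4 <= rho by nra.
apply/eqP; apply: contraT => W_neq0.
have := W_nonempty_bound e_sym e_irr x_pos x_max x_eigen c_Aplus l_Aplus l_neq_c
          Aplus_star e_free e_no_isolated rho_ge4 W_neq0.
have : 0 <= (rho - lam) * (rho + lam - 1) by rewrite mulr_ge0 //; lra.
by rewrite e_m m_eq natrD natrM; nra.
Qed.
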